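(* The restriction $\lambda$ of the Lebesgue measure on $\mathbb R$ to the lattice of open subsets of the Sorgenfrey line $\mathbb R_\ell$ is a continuous valuation.
   Context: The Sorgenfrey line $\mathbb R_\ell$ is $\mathbb R$ with the topology generated by the half-open intervals $[a,b[$, $a<b$ (its open sets are Lebesgue measurable). A continuous valuation is a map $\nu:\mathcal OX\to[0,\infty]$ with $\nu(\emptyset)=0$, monotone, modular, and preserving suprema of directed families of open sets. *)

From HB Require Import structures.
From mathcomp Require Import all_boot all_order all_algebra.
From mathcomp Require Import all_classical all_reals all_analysis.
Set Implicit Arguments. Unset Strict Implicit. Unset Printing Implicit Defensive.
Import Order.TTheory GRing.Theory Num.Theory.
Local Open Scope classical_set_scope.
Local Open Scope ring_scope.

Definition sorgenfrey_open {R : realType} (U : set R) : Prop :=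
  forall x, U x -> exists a b : R, a < b /\ `[a, b[%classic x /\ `[a, b[%classic `<=` U.

Definition directed_family {T : Type} (D : set (set T)) : Prop :=
  D !=set0 /\ forall U V, D U -> D V -> exists2 W, D W & U `|` V `<=` W.

Local Open Scope ereal_scope.

Definition continuous_valuation {R : realType} {T : Type}
    (isopen : set T -> Prop) (nu : set T -> \bar R) : Prop :=
  [/\ (forall U, isopen U -> 0 <= nu U),
      nu set0 = 0,
      (forall U V, isopen U -> isopen V -> (U `<=` V)%classic -> nu U <= nu V),
      (forall U V, isopen U -> isopen V ->
         nu U + nu V = nu (U `|` V)%classic + nu (U `&` V)%classic) &
      (forall D : set (set T), (forall U, D U -> isopen U) -> directed_family D ->
         nu (\bigcup_(U in D) U)%classic = ereal_sup [set nu U | U in D]%classic)].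

From mathcomp Require Import all_boot all_order all_algebra.
From mathcomp Require Import all_classical all_reals all_analysis.
Set Implicit Arguments. Unset Strict Implicit. Unset Printing Implicit Defensive.
Import Order.TTheory GRing.Theory Num.Theory.
Local Open Scope classical_set_scope.
Local Open Scope ring_scope.

(* Let W be the union of a family D of Sorgenfrey-open sets and O the union of
   the countably many rational open intervals lying inside some member of D.
   Every x in W has a basic neighbourhood [x, b[ inside a member of D, so
   ]x, b[ is contained in O; hence the points of W \ O are right-isolated in
   W \ O, and such a set of reals is countable.  Thus W is Lebesgue measurable
   with the same measure as O.  When D is directed, every finite union of the
   intervals making up O lies in a single member of D, and continuity of the
   measure from below gives measure O <= sup_{U in D} measure U. *)

Lemma countable_right_isolated (R : realType) (S : set R) :
  (forall x, S x -> exists2 b, x < b & `]x, b[ `<=` ~` S) -> countable S.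
Proof.
move=> isoS.
(* a rational chosen in ]x, b[ increases strictly with x on S *)
have /choice[r rP] : forall x, exists q : rat,
    S x -> x < ratr q /\ forall y, S y -> x < y -> ratr q < y.
  move=> x; have [Sx|] := pselect (S x); last by exists 0%Q.
  have [b xb bS] := isoS x Sx.
  have [q] := rat_in_itvoo xb; rewrite in_itv /= => /andP[xq qb].
  exists q => _; split => // y Sy xy; rewrite (lt_le_trans qb) // leNgt.
  by apply/negP => yb; apply: (bS y) => //=; rewrite in_itv /= xy yb.
apply/countable_injP; exists (choice.pickle \o r).
move=> x y /[!inE] Sx Sy /(pcan_inj choice.pickleK) rxy.
wlog xy : x y Sx Sy rxy / x < y.
  move=> wlog_xy; case: (ltgtP x y) => // [xy|yx]; first exact: wlog_xy.
  by apply/esym/wlog_xy.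
have := (rP y Sy).1; rewrite -rxy => /(lt_trans ((rP x Sx).2 y Sy xy)).
by rewrite ltxx.
Qed.

Lemma measurable_countable_setD d (T : sigmaRingType d) (A B : set T) :
  (forall t : T, measurable [set t]) ->
  measurable A -> A `<=` B -> countable (B `\` A) -> measurable B.
Proof.
move=> m1 mA AB cBA; rewrite -(setDUK AB).
by apply: measurableU => //; exact: countable_measurable.
Qed.

Local Open Scope ereal_scope.

Lemma lebesgue_measure_countable_setD (R : realType) (A B : set R) :
  measurable A -> A `<=` B -> countable (B `\` A) ->
  lebesgue_measure B = lebesgue_measure A.
Proof.
move=> mA AB cBA; have mBA : measurable (B `\` A).
  by apply: countable_measurable => // t; exact: measurable_set1.
by rewrite -(setDUK AB) measureU0 //; exact: countable_lebesgue_measure0.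
Qed.

Lemma measureUI d (T : ringOfSetsType d) (R : realFieldType)
    (mu : {content set T -> \bar R}) (A B : set T) :
  measurable A -> measurable B -> mu A + mu B = mu (A `|` B) + mu (A `&` B).
Proof.
move=> mA mB; rewrite (measureDI mu mB mA) addeA -measureU //.
- by rewrite setUDr setDv setD0 setIC.
- exact: measurableD.
- by rewrite setDE setICA setICr setI0.
Qed.

Lemma directed_bigsetU_sub T (D : set (set T)) (J : (set T)^nat) :
  directed_family D -> (forall k, exists2 U, D U & J k `<=` U) ->
  forall n, exists2 U, D U & \big[setU/set0]_(i < n) J i `<=` U.
Proof.
move=> [[U0 DU0] Ddir] DJ; elim=> [|n [U DU JU]].
  by exists U0 => //; rewrite big_ord0.
have [V DV JV] := DJ n; have [W DW UVW] := Ddir U V DU DV.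
exists W => //; rewrite big_ord_recr /=.
by apply: subset_trans UVW; exact: setUSS.
Qed.

Lemma measure_bigcup_le_ereal_sup d (T : sigmaRingType d) (R : realType)
    (mu : {measure set T -> \bar R}) (D : set (set T)) (J : (set T)^nat) :
  (forall U, D U -> measurable U) -> directed_family D ->
  (forall k, measurable (J k)) -> (forall k, exists2 U, D U & J k `<=` U) ->
  mu (\bigcup_k J k) <= ereal_sup [set mu U | U in D].
Proof.
move=> mD Ddir mJ DJ; pose F n := \big[setU/set0]_(i < n.+1) J i.
have mF n : measurable (F n) by apply: bigsetU_measurable => i _.
have FJ : \bigcup_n F n = \bigcup_k J k by exact: bigcup_bigsetU_bigcup.
have ndF : nondecreasing_seq F.
  by move=> n m nm; apply/subsetPset; exact: subset_bigsetU.
have mFJ : measurable (\bigcup_n F n) by rewrite FJ; exact: bigcupT_measurable.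
have := nondecreasing_cvg_mu (mu := mu) mF mFJ ndF; rewrite FJ => cvF.
rewrite -(cvg_lim _ cvF) //; apply: lime_le; first exact: cvgP cvF.
apply: nearW => n /=; have [U DU FU] := directed_bigsetU_sub Ddir DJ n.+1.
apply: le_trans (ereal_sup_ubound _); last by exists U.
by apply: le_measure; rewrite ?inE; [exact: mF | exact: mD | exact: FU].
Qed.

Local Close Scope ereal_scope.

Section subordinate_intervals.
Variable R : realType.

Definition rat_itv (k : nat) : set R :=
  if choice.unpickle k is Some (p, q) then `]ratr p, ratr q[ else set0.

Lemma measurable_rat_itv k : measurable (rat_itv k).
Proof. by rewrite /rat_itv; case: choice.unpickle => [[p q]|]. Qed.

Lemma rat_itv_sub_itvoo (a b y : R) : a < y < b ->
  exists k, rat_itv k y /\ rat_itv k `<=` `]a, b[.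
Proof.
move=> /andP[ay yb].
have [p] := rat_in_itvoo ay; rewrite in_itv /= => /andP[ap py].
have [q] := rat_in_itvoo yb; rewrite in_itv /= => /andP[yq qb].
exists (choice.pickle (p, q)); rewrite /rat_itv choice.pickleK; split.
  by rewrite /= in_itv /= py yq.
by apply: subset_itvW; rewrite ltW.
Qed.

Variable D : set (set R).

Definition subordinate_itv (k : nat) : set R :=
  if `[< exists2 U, D U & rat_itv k `<=` U >] then rat_itv k else set0.

Lemma measurable_subordinate_itv k : measurable (subordinate_itv k).
Proof.
by rewrite /subordinate_itv; case: ifP => _ //; exact: measurable_rat_itv.
Qed.

Hypothesis D_neq0 : D !=set0.

Lemma subordinate_itv_sub k : exists2 U, D U & subordinate_itv k `<=` U.
Proof.
rewrite /subordinate_itv; case: asboolP => [//|_].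
by have [U DU] := D_neq0; exists U.
Qed.

Hypothesis D_open : forall U, D U -> sorgenfrey_open U.

Let W := \bigcup_(U in D) U.
Let O := \bigcup_k subordinate_itv k.

Lemma bigcup_subordinate_itv_sub : O `<=` W.
Proof.
move=> x [k _]; rewrite /subordinate_itv; case: asboolP => // -[U DU kU] /kU.
by exists U.
Qed.

Lemma sorgenfrey_right_itv_sub x : W x -> exists2 b, x < b & `]x, b[ `<=` O.
Proof.
move=> [U DU Ux]; have [a [b [ab [/= xab abU]]]] := D_open DU Ux.
move: xab; rewrite in_itv /= => /andP[ax xb]; exists b => // y xyb.
have [k [yk kxb]] := rat_itv_sub_itvoo xyb.
exists k => //; rewrite /subordinate_itv; case: asboolP => // -[].
exists U => // z /kxb; rewrite /= !in_itv /= => /andP[xz zb]; apply: abU.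
by rewrite /= in_itv /= zb (le_trans ax) // ltW.
Qed.

Lemma countable_bigcup_setD_subordinate : countable (W `\` O).
Proof.
apply: countable_right_isolated => x [Wx _].
have [b xb bO] := sorgenfrey_right_itv_sub Wx.
by exists b => // y /bO Oy [].
Qed.

Lemma measurable_bigcup_sorgenfrey : measurable W.
Proof.
apply: (measurable_countable_setD _ _ bigcup_subordinate_itv_sub).
- exact: measurable_set1.
- by apply: bigcupT_measurable => k; exact: measurable_subordinate_itv.
- exact: countable_bigcup_setD_subordinate.
Qed.

Lemma lebesgue_measure_bigcup_sorgenfrey :
  lebesgue_measure W = lebesgue_measure O.
Proof.
apply: lebesgue_measure_countable_setD bigcup_subordinate_itv_sub _.
- by apply: bigcupT_measurable => k; exact: measurable_subordinate_itv.
- exact: countable_bigcup_setD_subordinate.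
Qed.

End subordinate_intervals.

Lemma sorgenfrey_open_measurable (R : realType) (U : set R) :
  sorgenfrey_open U -> measurable U.
Proof.
move=> oU; rewrite -(bigcup_set1 id U).
by apply: measurable_bigcup_sorgenfrey => _ ->.
Qed.

Local Open Scope ereal_scope.

Theorem corollary4p8 (R : realType) :
  continuous_valuation (@sorgenfrey_open R) (@lebesgue_measure R).
Proof.
split.
- by move=> U _; exact: measure_ge0.
- exact: measure0.
- move=> U V /sorgenfrey_open_measurable mU /sorgenfrey_open_measurable mV UV.
  by apply: le_measure; rewrite ?inE.
- move=> U V /sorgenfrey_open_measurable mU /sorgenfrey_open_measurable mV.
  exact: measureUI.
- move=> D Dopen Ddir; have mD U : D U -> measurable U.
    by move/Dopen; exact: sorgenfrey_open_measurable.
  apply/eqP; rewrite eq_le; apply/andP; split.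
    rewrite lebesgue_measure_bigcup_sorgenfrey //.
    apply: measure_bigcup_le_ereal_sup => //.
    - exact: measurable_subordinate_itv.
    - exact: subordinate_itv_sub Ddir.1.
  apply: ge_ereal_sup => _ [U DU <-]; apply: le_measure; rewrite ?inE.
  - exact: mD.
  - exact: measurable_bigcup_sorgenfrey.
  - exact: bigcup_sup.
Qed.
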